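(* Let $\mathbf{Y}$ be the class of all finite target sets $\mathcal{Y}$ (each target $y$ equipped with a vector $\vec{t}(y)\in\mathbb{R}^R$), and let $\mathbf{A}$ be the class of deterministic algorithms that, for every query $x$ (with vector $\vec{u}(x)\in\mathbb{R}^R$) and every $K$, exactly compute a top-$K$ set $S_x^K\in\arg\max_{\mathcal{S}\in[\mathcal{Y}]^K}\min_{y\in\mathcal{S}}s(x,y)$, where $s(x,y)=\vec{u}(x)^\intercal\vec{t}(y)$, without making wild guesses. Then Fagin's algorithm is not instance-optimal over $\mathbf{A}$ and $\mathbf{Y}$.
   Context: $[\mathcal{Y}]^K$ denotes the set of all $K$-element subsets of $\mathcal{Y}$. Access model: for each $r=1,\dots,R$ there is a list $L_r$ of all targets sorted so that $u_r(x)t_r(y)$ is non-increasing along the list; algorithms discover targets by reading these lists sequentially (sorted access) and may compute scores $s(x,y)$ of targets. An algorithm makes a wild guess if it computes $s(x,y)$ for a target $y$ before $y$ has been observed in any of the lists $L_1,\dots,L_R$. Fagin's algorithm: read the lists $L_1,\dots,L_R$ in parallel, one position per list per step, until at least $K$ targets have been observed in every one of the $R$ lists; then compute $s(x,y)$ for every target observed so far and return the $K$ highest-scoring ones. Instance optimality: writing $\mathrm{cost}(\mathcal{A},\mathcal{Y},x)$ for the cost (running time) of algorithm $\mathcal{A}$ on target set $\mathcal{Y}$ and query $x$, an algorithm $\mathcal{B}\in\mathbf{A}$ is instance-optimal over $\mathbf{A}$ and $\mathbf{Y}$ if there exist constants $c,c'$ such that $\mathrm{cost}(\mathcal{B},\mathcal{Y},x)\le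 c\cdot\mathrm{cost}(\mathcal{A},\mathcal{Y},x)+c'$ for every $\mathcal{A}\in\mathbf{A}$, every $\mathcal{Y}\in\mathbf{Y}$ and every query $x$. *)

From Stdlib Require Import Reals.
From mathcomp Require Import all_boot all_order all_algebra.
From mathcomp Require Import Rstruct.
Import Order.TTheory GRing.Theory Num.Theory.

Set Implicit Arguments.
Unset Strict Implicit.
Unset Printing Implicit Defensive.

Local Open Scope ring_scope.

(* The number R of lists is a fixed parameter (coordinates r = 0, ..., R-1). *)
(* Targets are identified by the natural numbers 0, ..., n-1; target y has   *)
(* vector t(y) = (t y 0, ..., t y (R-1)); the query x has vector             *)
(* u(x) = (u 0, ..., u (R-1)).  The list L_r (r < R) is a permutation of the *)
(* targets sorted so that u_r(x) t_r(y) is non-increasing (ties are broken   *)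
(* arbitrarily, so the lists are part of the instance).                      *)

Record instance := Instance {
  n_targets : nat;
  qvec : nat -> R;                 (* u(x), coordinates r < R meaningful *)
  tvec : nat -> nat -> R;          (* tvec y r = t_r(y) *)
  lists : nat -> seq nat
}.

Definition lval (I : instance) (r y : nat) : R := qvec I r * tvec I y r.

Definition score (Rn : nat) (I : instance) (y : nat) : R :=
  \sum_(r < Rn) lval I r y.

Definition valid_instance (Rn : nat) (I : instance) : Prop :=
  forall r, (r < Rn)%N ->
    perm_eq (lists I r) (iota 0 (n_targets I)) /\
    sorted (fun a b => lval I r b <= lval I r a) (lists I r).

Definition is_Ksubset (n K : nat) (S : seq nat) : bool :=
  [&& uniq S, size S == K & all (fun y => (y < n)%N) S].

(* minimum of f over a nonempty list (value 0 on the empty list, never used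
   for K >= 1) *)
Definition min_over (f : nat -> R) (S : seq nat) : R :=
  match S with
  | [::] => 0
  | y :: S' => foldr (fun z m => Num.min (f z) m) (f y) S'
  end.

Definition is_topK (Rn : nat) (I : instance) (K : nat) (S : seq nat) : Prop :=
  is_Ksubset (n_targets I) K S /\
  forall S', is_Ksubset (n_targets I) K S' ->
    min_over (score Rn I) S' <= min_over (score Rn I) S.

Inductive action :=
  | SortedAccess of nat          (* read the next position of list L_r *)
  | ComputeScore of nat
  | Output of seq nat.

Inductive event :=
  | EvAccess of nat & option (nat * R)
      (* sorted access to list r: the next target with its value u_r t_r(y),
         or None if the list is exhausted (or r >= R) *)
  | EvScore of nat & R.

(* A deterministic algorithm: given K, the query vector u(x) and the history
   of observations, it chooses its next action. *)
Definition algorithm := nat -> (nat -> R) -> seq event -> action.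

Definition accesses_to (r : nat) (h : seq event) : nat :=
  count (fun e => if e is EvAccess r' _ then r' == r else false) h.

Definition seen_in (r : nat) (h : seq event) : seq nat :=
  pmap (fun e => match e with
                 | EvAccess r' (Some (y, _)) => if r' == r then Some y else None
                 | _ => None end) h.

Definition observed (h : seq event) : seq nat :=
  pmap (fun e => match e with
                 | EvAccess _ (Some (y, _)) => Some y
                 | _ => None end) h.

Definition respond (Rn : nat) (I : instance) (h : seq event) (a : action)
  : event :=
  match a with
  | SortedAccess r =>
      let p := accesses_to r h in
      EvAccess r
        (if (r < Rn)%N && (p < size (lists I r))%N then
           let y := nth 0%N (lists I r) p in Some (y, lval I r y)
         else None)
  | ComputeScore y => EvScore y (score Rn I y)
  | Output _ => EvScore 0%N 0 (* never used *)
  end.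

Fixpoint history (Rn : nat) (A : algorithm) (K : nat) (I : instance) (k : nat)
  : seq event :=
  match k with
  | 0 => [::]
  | k'.+1 =>
      let h := history Rn A K I k' in
      match A K (qvec I) h with
      | Output _ => h
      | a => rcons h (respond Rn I h a)
      end
  end.

(* A halts on instance I with cost c (number of sorted accesses plus score
   computations performed) and output S *)
Definition runs (Rn : nat) (A : algorithm) (K : nat) (I : instance)
    (c : nat) (S : seq nat) : Prop :=
  A K (qvec I) (history Rn A K I c) = Output S /\
  forall k, (k < c)%N ->
    forall S', A K (qvec I) (history Rn A K I k) <> Output S'.

Definition no_wild_guess (Rn : nat) (A : algorithm) (K : nat) (I : instance)
    (c : nat) : Prop :=
  forall k, (k < c)%N -> forall y,
    A K (qvec I) (history Rn A K I k) = ComputeScore y ->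
    y \in observed (history Rn A K I k).

Definition in_class (Rn : nat) (A : algorithm) : Prop :=
  forall K I, valid_instance Rn I -> (K <= n_targets I)%N ->
    exists c S, runs Rn A K I c S /\ no_wild_guess Rn A K I c /\
                is_topK Rn I K S.

Definition instance_optimal (Rn : nat) (K : nat) (B : algorithm) : Prop :=
  exists c c' : R, forall A, in_class Rn A ->
    forall I, valid_instance Rn I -> (K <= n_targets I)%N ->
    forall cB SB cA SA, runs Rn B K I cB SB -> runs Rn A K I cA SA ->
      (cB%:R : R) <= c * cA%:R + c'.

Definition is_score_event (e : event) : bool :=
  if e is EvScore _ _ then true else false.

Definition is_access_event (e : event) : bool :=
  if e is EvAccess _ _ then true else false.

Definition scored (h : seq event) : seq (nat * R) :=
  pmap (fun e => if e is EvScore y s then Some (y, s) else None) h.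

Definition n_seen_everywhere (Rn : nat) (h : seq event) : nat :=
  size [seq y <- undup (observed h) | all (fun r => y \in seen_in r h) (iota 0 Rn)].

Definition fagin (Rn : nat) : algorithm := fun K u h =>
  let score_phase :=
    let cands := undup (observed h) in
    let done := map fst (scored h) in
    match [seq y <- cands | y \notin done] with
    | y :: _ => ComputeScore y
    | [::] =>
        let sc := scored h in
        let sorted_sc := sort (fun a b : nat * R => b.2 <= a.2) sc in
        Output (take K (map fst sorted_sc))
    end in
  if has is_score_event h then score_phase
  else
    let na := count is_access_event h in
    (* in the middle of a parallel step, or stopping condition not met *)
    if (na %% Rn != 0)%N || (n_seen_everywhere Rn h < K)%N
    then SortedAccess (na %% Rn)
    else score_phase.

From Stdlib Require Import Reals Classical ClassicalEpsilon.
From mathcomp Require Import all_boot all_order all_algebra Rstruct zify.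
Import Order.TTheory GRing.Theory Num.Theory.

Set Implicit Arguments.
Unset Strict Implicit.
Unset Printing Implicit Defensive.

(** Fix a zero query u(x) = 0: all scores vanish, so every K-subset is a
    top-K set.  The algorithm [shortcut_zero_query] answers such a query with
    no access at all; on any other query it reads L_0 to its end (so every
    target is observed) and scores everything, hence it belongs to the class
    and costs 0 on zero queries.  Fagin's algorithm ignores the query.  If L_0
    lists the targets 0, ..., n-1 in increasing order and the other lists in
    decreasing order (legal, since all values are 0), the first m positions of
    L_0 and L_1 are disjoint unless 2m > n, so Fagin's algorithm needs more
    than n/2 sorted accesses before stopping.  Letting n grow defeats any
    constants c, c'. *)

Lemma foldr_min_mem (v : R) (V : seq R) : foldr Num.min v V \in v :: V.
Proof.
elim: V => [|w V IH] /=; first exact: mem_head.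
rewrite minEle !inE; case: ifP => _; first by rewrite eqxx orbT.
by move: IH; rewrite inE => /orP[->|->]; rewrite ?orbT.
Qed.

Lemma min_overE (f : nat -> R) (S : seq nat) :
  min_over f S = if map f S is v :: V then foldr Num.min v V else 0%R.
Proof. by case: S => //= y S; rewrite foldr_map. Qed.

Lemma min_over_mem (f : nat -> R) (S : seq nat) :
  S != [::] -> min_over f S \in map f S.
Proof. by rewrite min_overE; case: S => //= y S _; apply: foldr_min_mem. Qed.

Lemma eq_in_min_over (f g : nat -> R) (S : seq nat) :
  {in S, f =1 g} -> min_over f S = min_over g S.
Proof. by move/eq_in_map => fg; rewrite !min_overE fg. Qed.

Lemma min_over_eq0 (f : nat -> R) (S : seq nat) :
  (forall y, f y = 0%R) -> min_over f S = 0%R.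
Proof.
move=> f0; case: (eqVneq S [::]) => [-> //|/(min_over_mem f)].
by case/mapP=> y _ ->.
Qed.

Lemma exists_max_in_seq (V : seq R) (P : R -> Prop) :
  (exists2 v, v \in V & P v) ->
  exists2 v, P v & {in V, forall w, P w -> (w <= v)%R}.
Proof.
elim: V => [|a V IH] [v vV Pv]; first by rewrite in_nil in vV.
case: (classic (exists2 v, v \in V & P v)) => [/IH[m Pm max_m] | noV].
  case: (classic (P a)) => [Pa | nPa].
    have [le_am | lt_ma] := leP a m.
      by exists m => // w; rewrite inE => /orP[/eqP-> | /max_m].
    exists a => // w; rewrite inE => /orP[/eqP-> // | wV Pw].
    exact: le_trans (max_m w wV Pw) (ltW lt_ma).
  by exists m => // w; rewrite inE => /orP[/eqP-> /nPa[] | /max_m].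
exists a.
  by move: vV; rewrite inE => /orP[/eqP<- // | vV]; case: noV; exists v.
by move=> w; rewrite inE => /orP[/eqP-> // | wV Pw]; case: noV; exists w.
Qed.

Definition is_best_Ksubset (n K : nat) (f : nat -> R) (S : seq nat) : Prop :=
  is_Ksubset n K S /\
  forall S', is_Ksubset n K S' -> (min_over f S' <= min_over f S)%R.

Lemma is_Ksubset_iota n K : K <= n -> is_Ksubset n K (iota 0 K).
Proof.
move=> le_Kn; rewrite /is_Ksubset iota_uniq size_iota eqxx /=.
by apply/allP => y; rewrite mem_iota add0n => /leq_trans; apply.
Qed.

Lemma exists_best_Ksubset n K (f : nat -> R) :
  K <= n -> exists S, is_best_Ksubset n K f S.
Proof.
move=> le_Kn.
have values S : is_Ksubset n K S -> min_over f S \in 0%R :: map f (iota 0 n).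
  move=> /and3P[_ _ /allP inS]; case: (eqVneq S [::]) => [-> | /(min_over_mem f)].
    exact: mem_head.
  by case/mapP=> y yS ->; rewrite inE map_f ?orbT // mem_iota inS.
pose attained v := exists2 S, is_Ksubset n K S & min_over f S = v.
have [|v [S SK <-] max_v] := @exists_max_in_seq (0%R :: map f (iota 0 n)) attained.
  have iotaK := is_Ksubset_iota le_Kn.
  by exists (min_over f (iota 0 K)); [apply: values | exists (iota 0 K)].
by exists S; split=> // S' S'K; apply: max_v; [apply: values | exists S'].
Qed.

Definition best_Ksubset n K (f : nat -> R) : seq nat :=
  epsilon (inhabits [::]) (is_best_Ksubset n K f).

Lemma best_KsubsetP n K (f : nat -> R) :
  K <= n -> is_best_Ksubset n K f (best_Ksubset n K f).
Proof. by move=> le_Kn; apply: epsilon_spec; apply: exists_best_Ksubset. Qed.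

Lemma eq_in_best_Ksubset n K (f g : nat -> R) S :
  (forall y, y < n -> f y = g y) ->
  is_best_Ksubset n K f S -> is_best_Ksubset n K g S.
Proof.
move=> fg [SK best]; have eq_min S' : is_Ksubset n K S' -> min_over f S' = min_over g S'.
  by case/and3P=> _ _ /allP inS'; apply: eq_in_min_over => y /inS'; apply: fg.
by split=> // S' S'K; rewrite -!eq_min //; apply: best.
Qed.

Definition is_output (a : action) : bool := if a is Output _ then true else false.

Lemma history_succ Rn (A : algorithm) K I k :
  let h := history Rn A K I k in
  ~~ is_output (A K (qvec I) h) ->
  history Rn A K I k.+1 = rcons h (respond Rn I h (A K (qvec I) h)).
Proof. by rewrite /=; case: (A _ _ _). Qed.

Lemma runs_intro Rn (A : algorithm) K I c S :
  (forall k, k < c -> ~~ is_output (A K (qvec I) (history Rn A K I k))) ->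
  A K (qvec I) (history Rn A K I c) = Output S -> runs Rn A K I c S.
Proof. by move=> silent halt; split=> // k /silent + S'; case: (A _ _ _). Qed.

Lemma seen_in_sub_observed r h : {subset seen_in r h <= observed h}.
Proof.
elim: h => [|[r' [[y v]|] | y s] h IH] z //=; try exact: IH.
rewrite inE; case: eqP => _ /=; last by move/IH ->; rewrite orbT.
by rewrite inE => /orP[-> | /IH ->]; rewrite ?orbT.
Qed.

Section ScorePhase.

Variables (Rn : nat) (I : instance).

Definition score_events (s : seq nat) : seq event :=
  [seq EvScore y (score Rn I y) | y <- s].

Definition score_phase (out : seq event -> seq nat) (h : seq event) : action :=
  match [seq y <- undup (observed h) | y \notin map fst (scored h)] with
  | y :: _ => ComputeScore y
  | [::] => Output (out h)
  end.

Lemma observed_cat_score_events h s : observed (h ++ score_events s) = observed h.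
Proof. by rewrite /observed pmap_cat; elim: s => [|y s] /=; rewrite ?cats0. Qed.

Lemma scored_no_score h : ~~ has is_score_event h -> scored h = [::].
Proof. by elim: h => // -[r o|y s] h IH. Qed.

Lemma scored_cat_score_events h s : ~~ has is_score_event h ->
  scored (h ++ score_events s) = [seq (y, score Rn I y) | y <- s].
Proof.
move=> /scored_no_score h0; rewrite /scored pmap_cat -/(scored h) h0 /=.
by elim: s => //= y s ->.
Qed.

Lemma filter_notin_take (T : eqType) (s : seq T) j :
  uniq s -> [seq y <- s | y \notin take j s] = drop j s.
Proof.
rewrite -[s in uniq s](cat_take_drop j) cat_uniq => /and3P[_ disj _].
rewrite -[s in filter _ s](cat_take_drop j) filter_cat.
rewrite (eq_in_filter (a2 := pred0)) ?filter_pred0; last by move=> y /= ->.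
by apply/all_filterP/allP => y yd; apply: contra disj => yt; apply/hasP; exists y.
Qed.

Lemma score_phase_after out h j (cands := undup (observed h)) :
  ~~ has is_score_event h ->
  score_phase out (h ++ score_events (take j cands)) =
  if j < size cands then ComputeScore (nth 0 cands j)
  else Output (out (h ++ score_events (take j cands))).
Proof.
move=> h0; rewrite /score_phase observed_cat_score_events scored_cat_score_events //.
rewrite -map_comp (@eq_map _ _ _ id) // map_id filter_notin_take ?undup_uniq // -/cands.
by case: ltnP => [lt_j | /drop_oversize ->]; first rewrite (drop_nth 0 lt_j).
Qed.

Lemma score_phase_observed out h y :
  score_phase out h = ComputeScore y -> y \in observed h.
Proof.
rewrite /score_phase; case E: [seq _ <- _ | _] => [|z s] //= [<-].
have : z \in [seq y <- undup (observed h) | y \notin map fst (scored h)].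
  by rewrite E mem_head.
by rewrite mem_filter mem_undup => /andP[].
Qed.

Lemma runs_score_phase (A : algorithm) K k0 h0 out
    (cands := undup (observed h0)) :
  history Rn A K I k0 = h0 -> ~~ has is_score_event h0 ->
  (forall k, k < k0 -> ~~ is_output (A K (qvec I) (history Rn A K I k))) ->
  (forall s, A K (qvec I) (h0 ++ score_events s) =
             score_phase out (h0 ++ score_events s)) ->
  runs Rn A K I (k0 + size cands) (out (h0 ++ score_events cands)).
Proof.
move=> hist0 noscore silent acts.
have step j : ~~ is_output (A K (qvec I) (h0 ++ score_events (take j cands))) =
              (j < size cands).
  by rewrite acts score_phase_after //; case: ltnP.
have hist j : j <= size cands ->
    history Rn A K I (k0 + j) = h0 ++ score_events (take j cands).
  elim: j => [|j IH] lt_j; first by rewrite addn0 take0 cats0.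
  have hist_j := IH (ltnW lt_j).
  rewrite addnS history_succ hist_j ?step // acts score_phase_after // lt_j.
  by rewrite (take_nth 0 lt_j) /score_events map_rcons rcons_cat.
apply: runs_intro => [k lt_k | ]; last first.
  by rewrite hist // acts score_phase_after // ltnn take_size.
have [/silent // | le_k] := ltnP k k0.
rewrite -(subnKC le_k) hist ?step; first by rewrite ltn_subLR.
by rewrite leq_subLR ltnW.
Qed.

End ScorePhase.

Lemma size_lists Rn I r :
  valid_instance Rn I -> r < Rn -> size (lists I r) = n_targets I.
Proof. by move=> valid /valid[perm _]; rewrite (perm_size perm) size_iota. Qed.

Lemma mem_lists Rn I r y :
  valid_instance Rn I -> r < Rn -> (y \in lists I r) = (y < n_targets I).
Proof. by move=> valid /valid[perm _]; rewrite (perm_mem perm) mem_iota. Qed.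

Lemma count_iota_modn d r k : 0 < d -> r < d ->
  count (fun j => j %% d == r) (iota 0 k) = k %/ d + (r < k %% d).
Proof.
move=> d_gt0 lt_rd; elim: k => [|k IH]; first by rewrite div0n mod0n.
rewrite -addn1 iotaD count_cat IH /= addn0 add0n.
have := divn_eq k d; have := ltn_pmod k d_gt0.
have := divn_eq (k + 1) d; have := ltn_pmod (k + 1) d_gt0.
by case: (ltnP r (k %% d)); case: (ltnP r ((k + 1) %% d)); case: eqP => /=;
  move=> *; nia.
Qed.

Lemma filter_iota_modn d r m : r < d ->
  [seq j <- iota 0 (m * d) | j %% d == r] = [seq i * d + r | i <- iota 0 m].
Proof.
move=> lt_rd; elim: m => [|m IH]; first by rewrite mul0n.
rewrite mulSnr iotaD filter_cat IH add0n -[m * d]addn0 iotaDl filter_map.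
rewrite (eq_in_filter (a2 := pred1 r)); last first.
  by move=> i; rewrite mem_iota /= => lt_id; rewrite modnMDl modn_small.
by rewrite filter_pred1_uniq ?iota_uniq ?mem_iota // -addn1 iotaD map_cat.
Qed.

Definition is_exhausted_event (e : event) : bool :=
  if e is EvAccess _ None then true else false.

Section RoundRobin.

Variables (d : nat) (I : instance).

Definition round_robin_access (j : nat) : event :=
  let r := j %% d in
  let y := nth 0 (lists I r) (j %/ d) in EvAccess r (Some (y, lval I r y)).

Definition round_robin (k : nat) : seq event := map round_robin_access (iota 0 k).

Lemma round_robin_succ k :
  round_robin k.+1 = rcons (round_robin k) (round_robin_access k).
Proof. by rewrite /round_robin -addn1 iotaD map_cat cats1. Qed.

Lemma has_score_round_robin k : has is_score_event (round_robin k) = false.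
Proof. by rewrite has_map; apply/hasPn. Qed.

Lemma has_exhausted_round_robin k :
  has is_exhausted_event (round_robin k) = false.
Proof. by rewrite has_map; apply/hasPn. Qed.

Lemma count_access_round_robin k : count is_access_event (round_robin k) = k.
Proof. by rewrite count_map (eq_count (a2 := predT)) // count_predT size_iota. Qed.

Lemma accesses_to_round_robin r k : 0 < d -> r < d ->
  accesses_to r (round_robin k) = k %/ d + (r < k %% d).
Proof.
by move=> d_gt0 lt_rd; rewrite -count_iota_modn // /accesses_to count_map.
Qed.

Lemma seen_in_round_robin r k :
  seen_in r (round_robin k) =
  [seq nth 0 (lists I r) (j %/ d) | j <- iota 0 k & j %% d == r].
Proof.
elim: k => // k IH.
rewrite round_robin_succ -cats1 /seen_in pmap_cat -/(seen_in _ _) IH.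
rewrite -addn1 iotaD filter_cat map_cat /=.
by case: eqP => [<- | _]; rewrite ?eqxx.
Qed.

Lemma seen_in_round_robin_rounds r m : 0 < d -> r < d ->
  seen_in r (round_robin (m * d)) = mkseq (nth 0 (lists I r)) m.
Proof.
move=> d_gt0 lt_rd; rewrite seen_in_round_robin filter_iota_modn // -map_comp.
by apply: eq_map => i /=; rewrite divnMDl // divn_small // addn0.
Qed.

Lemma observed_round_robin k :
  observed (round_robin k) =
  [seq nth 0 (lists I (j %% d)) (j %/ d) | j <- iota 0 k].
Proof.
elim: k => // k IH.
rewrite round_robin_succ -cats1 /observed pmap_cat -/(observed _) IH.
by rewrite -addn1 iotaD map_cat.
Qed.

End RoundRobin.

Lemma observed_round_robin1 Rn I : 0 < Rn -> valid_instance Rn I ->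
  observed (round_robin 1 I (n_targets I)) = lists I 0.
Proof.
move=> Rn_gt0 valid; rewrite observed_round_robin -(size_lists valid Rn_gt0).
by rewrite -[RHS](mkseq_nth 0); apply: eq_map => j; rewrite modn1 divn1.
Qed.

Lemma history_round_robin Rn (A : algorithm) K I d k0 :
  valid_instance Rn I -> 0 < d <= Rn -> k0 <= n_targets I * d ->
  (forall k, k < k0 -> A K (qvec I) (round_robin d I k) = SortedAccess (k %% d)) ->
  forall k, k <= k0 -> history Rn A K I k = round_robin d I k.
Proof.
move=> valid /andP[d_gt0 le_d] le_k0 acts; elim=> [// | k IH] lt_k.
have hist_k := IH (ltnW lt_k).
have lt_r : k %% d < Rn := leq_trans (ltn_pmod k d_gt0) le_d.
rewrite history_succ hist_k acts //=.
rewrite accesses_to_round_robin ?ltn_pmod // ltnn addn0 lt_r (size_lists valid lt_r).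
by rewrite ltn_divLR // (leq_trans lt_k le_k0) round_robin_succ.
Qed.

Definition recorded_score (h : seq event) (y : nat) : R :=
  (nth (0, 0%R) (scored h) (index y (map fst (scored h)))).2.

Lemma recorded_score_events Rn I h s y :
  ~~ has is_score_event h -> y \in s ->
  recorded_score (h ++ score_events Rn I s) y = score Rn I y.
Proof.
move=> noscore ys; rewrite /recorded_score scored_cat_score_events // -map_comp.
by rewrite (@eq_map _ _ _ id) // map_id (nth_map 0) ?index_mem //= nth_index.
Qed.

(* Once L_0 is exhausted and every observed target is scored,
   [size (scored h)] is the number of targets. *)
Definition scan_then_score (K : nat) (h : seq event) : action :=
  if has is_score_event h || has is_exhausted_event h then
    score_phase (fun h => best_Ksubset (size (scored h)) K (recorded_score h)) h
  else SortedAccess 0.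

Definition shortcut_zero_query (Rn : nat) : algorithm := fun K u h =>
  if [forall r : 'I_Rn, u r == 0%R] then Output (iota 0 K) else scan_then_score K h.

Lemma shortcut_zero_query_no_wild_guess Rn K I c :
  no_wild_guess Rn (shortcut_zero_query Rn) K I c.
Proof.
move=> k _ y; rewrite /shortcut_zero_query /scan_then_score.
by case: ifP => // _; case: ifP => // _; apply: score_phase_observed.
Qed.

Lemma score_zero_query Rn I y :
  [forall r : 'I_Rn, qvec I r == 0%R] -> score Rn I y = 0%R.
Proof.
move/forallP=> zero; rewrite /score big1 // => r _.
by rewrite /lval (eqP (zero r)) Rmult_0_l.
Qed.

Lemma shortcut_zero_query_halts Rn K I :
  [forall r : 'I_Rn, qvec I r == 0%R] ->
  runs Rn (shortcut_zero_query Rn) K I 0 (iota 0 K).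
Proof. by move=> zero; split=> //; rewrite /= /shortcut_zero_query zero. Qed.

Lemma scan_then_score_correct Rn (A : algorithm) K I :
  0 < Rn -> valid_instance Rn I -> K <= n_targets I ->
  (forall h, A K (qvec I) h = scan_then_score K h) ->
  exists c S, runs Rn A K I c S /\ is_topK Rn I K S.
Proof.
move=> Rn_gt0 valid le_Kn acts; set n := n_targets I; set l0 := lists I 0.
have size_l0 : size l0 = n := size_lists valid Rn_gt0.
have scanning k : A K (qvec I) (round_robin 1 I k) = SortedAccess (k %% 1).
  by rewrite acts /scan_then_score has_score_round_robin has_exhausted_round_robin modn1.
have hist k : k <= n -> history Rn A K I k = round_robin 1 I k.
  by apply: history_round_robin => //; rewrite muln1.
set h0 := rcons (round_robin 1 I n) (EvAccess 0 None).
have hist0 : history Rn A K I n.+1 = h0.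
  rewrite history_succ hist // scanning //= accesses_to_round_robin ?modn1 // divn1 addn0.
  by rewrite Rn_gt0 size_l0 ltnn.
have noscore : ~~ has is_score_event h0.
  by rewrite /h0 -cats1 has_cat has_score_round_robin.
have observed0 : undup (observed h0) = l0.
  rewrite /h0 -cats1 /observed pmap_cat cats0 -/(observed _).
  rewrite (observed_round_robin1 Rn_gt0 valid).
  by rewrite undup_id // (perm_uniq (proj1 (valid 0 Rn_gt0))) iota_uniq.
have silent k : k < n.+1 -> ~~ is_output (A K (qvec I) (history Rn A K I k)).
  by move=> lt_k; rewrite hist // scanning.
pose out h := best_Ksubset (size (scored h)) K (recorded_score h).
have exhausted : has is_exhausted_event h0 by rewrite has_rcons.
have scoring s : A K (qvec I) (h0 ++ score_events Rn I s) =
                 score_phase out (h0 ++ score_events Rn I s).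
  by rewrite acts /scan_then_score !has_cat exhausted !(orbT, orTb).
have := runs_score_phase hist0 noscore silent scoring.
rewrite observed0; set hf := h0 ++ score_events Rn I l0 => run.
exists (n.+1 + size l0), (best_Ksubset (size (scored hf)) K (recorded_score hf)).
split=> //; rewrite /is_topK -/n.
have -> : size (scored hf) = n by rewrite scored_cat_score_events // size_map.
apply: eq_in_best_Ksubset (best_KsubsetP _ le_Kn) => y lt_y.
by rewrite recorded_score_events // (mem_lists _ valid Rn_gt0).
Qed.

Lemma shortcut_zero_query_in_class Rn :
  0 < Rn -> in_class Rn (shortcut_zero_query Rn).
Proof.
move=> Rn_gt0 K I valid le_Kn.
have [zero | nonzero] := boolP [forall r : 'I_Rn, qvec I r == 0%R].
  exists 0, (iota 0 K); split; first exact: shortcut_zero_query_halts.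
  split; first exact: shortcut_zero_query_no_wild_guess.
  split=> [|S' _]; first exact: is_Ksubset_iota.
  by rewrite !min_over_eq0 // => y; apply: score_zero_query.
have [|c [S [run top]]] :=
  scan_then_score_correct (A := shortcut_zero_query Rn) Rn_gt0 valid le_Kn.
  by move=> h; rewrite /shortcut_zero_query (negbTE nonzero).
by exists c, S; split=> //; split=> //; apply: shortcut_zero_query_no_wild_guess.
Qed.

Definition fagin_out (K : nat) (h : seq event) : seq nat :=
  take K (map fst (sort (fun a b : nat * R => (b.2 <= a.2)%R) (scored h))).

Lemma fagin_scoring Rn K u h :
  has is_score_event h -> fagin Rn K u h = score_phase (fagin_out K) h.
Proof. by rewrite /fagin => ->. Qed.

Lemma fagin_round_robin Rn K u I k :
  fagin Rn K u (round_robin Rn I k) =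
  if (k %% Rn != 0) || (n_seen_everywhere Rn (round_robin Rn I k) < K)
  then SortedAccess (k %% Rn) else score_phase (fagin_out K) (round_robin Rn I k).
Proof. by rewrite /fagin has_score_round_robin count_access_round_robin. Qed.

Lemma n_seen_everywhere_full Rn K I :
  0 < Rn -> valid_instance Rn I -> K <= n_targets I ->
  K <= n_seen_everywhere Rn (round_robin Rn I (n_targets I * Rn)).
Proof.
move=> Rn_gt0 valid le_Kn; set n := n_targets I; set h := round_robin Rn I (n * Rn).
have seen r y : r < Rn -> y < n -> y \in seen_in r h.
  move=> lt_r lt_y; rewrite seen_in_round_robin_rounds // -[n](size_lists valid lt_r).
  by rewrite -/(mkseq _ _) mkseq_nth (mem_lists _ valid lt_r).
have sub : {subset iota 0 n <= [seq y <- undup (observed h) |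
                                 all (fun r => y \in seen_in r h) (iota 0 Rn)]}.
  move=> y; rewrite mem_iota add0n => lt_y.
  rewrite mem_filter mem_undup (seen_in_sub_observed (seen 0 y Rn_gt0 lt_y)) andbT.
  by apply/allP => r; rewrite mem_iota add0n => lt_r; apply: seen.
by have := uniq_leq_size (iota_uniq 0 n) sub; rewrite size_iota; apply: leq_trans.
Qed.

Lemma fagin_runs Rn K I : 0 < Rn -> valid_instance Rn I -> K <= n_targets I ->
  exists m cB SB, [/\ runs Rn (fagin Rn) K I cB SB,
    K <= n_seen_everywhere Rn (round_robin Rn I (m * Rn)) & m <= cB].
Proof.
move=> Rn_gt0 valid le_Kn; have full := n_seen_everywhere_full Rn_gt0 valid le_Kn.
have [m stop min_m] := ex_minnP (ex_intro
  (fun m => K <= n_seen_everywhere Rn (round_robin Rn I (m * Rn))) _ full).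
have accessing k : k < m * Rn ->
    fagin Rn K (qvec I) (round_robin Rn I k) = SortedAccess (k %% Rn).
  move=> lt_k; rewrite fagin_round_robin; case: eqP => [mod0 | //] /=.
  have k_eq : k = k %/ Rn * Rn by rewrite {1}(divn_eq k Rn) mod0 addn0.
  suff -> : n_seen_everywhere Rn (round_robin Rn I k) < K by [].
  by rewrite ltnNge k_eq; apply/negP => /min_m; rewrite leqNgt ltn_divLR // lt_k.
have hist : forall k, k <= m * Rn -> history Rn (fagin Rn) K I k = round_robin Rn I k.
  apply: history_round_robin accessing => //; first by rewrite Rn_gt0 leqnn.
  exact: leq_mul (min_m _ full) (leqnn Rn).
have silent k : k < m * Rn ->
    ~~ is_output (fagin Rn K (qvec I) (history Rn (fagin Rn) K I k)).
  by move=> lt_k; rewrite (hist k (ltnW lt_k)) accessing.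
pose h0 := round_robin Rn I (m * Rn).
have scoring s : fagin Rn K (qvec I) (h0 ++ score_events Rn I s)
                 = score_phase (fagin_out K) (h0 ++ score_events Rn I s).
  case: s => [|y s]; first by rewrite cats0 fagin_round_robin modnMl /= ltnNge stop.
  by rewrite fagin_scoring // has_cat orbT.
have run := runs_score_phase (hist _ (leqnn _))
  (negbT (has_score_round_robin _ _ _)) silent scoring.
exists m; do 2!eexists; split; [exact: run | exact: stop |].
exact: leq_trans (leq_pmulr m Rn_gt0) (leq_addr _ _).
Qed.

Definition opposite_lists (n : nat) : instance :=
  Instance n (fun _ => 0%R) (fun _ _ => 0%R)
    (fun r => if r == 0 then iota 0 n else rev (iota 0 n)).

Lemma opposite_lists_valid Rn n : valid_instance Rn (opposite_lists n).
Proof.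
move=> r _ /=; split; first by case: (r == 0); rewrite ?perm_rev.
by case: (r == 0); rewrite ?rev_sorted; apply: sub_sorted (iota_sorted 0 n) => a b _;
  rewrite /lval /= lexx.
Qed.

Lemma n_seen_opposite_lists Rn n m : 1 < Rn ->
  0 < n_seen_everywhere Rn (round_robin Rn (opposite_lists n) (m * Rn)) -> n < m + m.
Proof.
move=> Rn_gt1; rewrite /n_seen_everywhere size_filter -has_count => /hasP[y _ /allP seen].
have seen_r r : r < Rn -> y \in seen_in r (round_robin Rn (opposite_lists n) (m * Rn)).
  by move=> lt_r; apply: seen; rewrite mem_iota.
have := seen_r 0 (ltnW Rn_gt1); have := seen_r 1 Rn_gt1.
rewrite !seen_in_round_robin_rounds ?(ltnW Rn_gt1) //=.
case/mapP=> i1; rewrite mem_iota add0n => lt_i1 ->.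
case/mapP=> i0; rewrite mem_iota add0n => lt_i0.
have [lt_i0n | ] := ltnP i0 n; last lia.
have [lt_i1n | ] := ltnP i1 n; last lia.
by rewrite nth_iota // nth_rev ?size_iota // nth_iota; lia.
Qed.

Lemma fagin_slow_on_opposite_lists Rn K n : 1 < Rn -> 0 < K <= n ->
  exists cB SB, runs Rn (fagin Rn) K (opposite_lists n) cB SB /\ n < cB + cB.
Proof.
move=> Rn_gt1 /andP[K_gt0 le_Kn].
have [m [cB [SB [run stop le_m]]]] :=
  fagin_runs (ltnW Rn_gt1) (@opposite_lists_valid Rn n) le_Kn.
exists cB, SB; split=> //.
have := n_seen_opposite_lists Rn_gt1 (leq_trans K_gt0 stop); lia.
Qed.

Theorem theorem3 (Rn K : nat) (hR : (2 <= Rn)%N) (hK : (1 <= K)%N) :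
  ~ instance_optimal Rn K (fagin Rn).
Proof.
move=> [c [c' optimal]].
pose N := Num.Def.archi_bound `|c'|%R.
have lt_c'N : (c' < N%:R)%R := le_lt_trans (ler_norm c') (archi_boundP (normr_ge0 c')).
have le_Kn : 0 < K <= N + N + K by rewrite hK leq_addl.
have [cB [SB [runB slow]]] := fagin_slow_on_opposite_lists hR le_Kn.
have zero : [forall r : 'I_Rn, qvec (opposite_lists (N + N + K)) r == 0%R].
  by apply/forallP.
have := optimal _ (shortcut_zero_query_in_class (ltnW hR)) _
  (@opposite_lists_valid Rn _) (leq_addl _ _) _ _ _ _
  runB (shortcut_zero_query_halts K zero).
rewrite mulr0 add0r => le_cB_c'.
have le_NcB : (N%:R <= cB%:R :> R)%R by rewrite ler_nat; lia.
by have := lt_le_trans lt_c'N (le_trans le_NcB le_cB_c'); rewrite ltxx.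
Qed.
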